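(* In the setting of the context, let $\mu^*\in U$ be such that $(\Phi,\mu^* )$ has no singular connection. Then $\{f_\mu\}_{\mu\in U}$ satisfies Hypothesis (E) at $\mu^*$.
   Context: Let $N\ge2$, $\lambda\in(0,1)$, and $\varphi_1,\dots,\varphi_N\colon[0,1]\to[0,1]$ bi-Lipschitz with Lipschitz constant $\le\lambda$, $\Phi=\{\varphi_i\}$, and assume $\varphi_i([0,1])\subset(0,1)$ for every $i$. Let $U=\{\mu=(\mu_1,\dots,\mu_{N-1}):0<\mu_1<\cdots<\mu_{N-1}<1\}$, $\mu_0=0$, $\mu_N=1$. For $\mu\in U$, $f_\mu\colon[0,1]\to[0,1]$ satisfies $f_\mu=\varphi_i$ on $A_{i,\mu}=(\mu_{i-1},\mu_i)$, and at each point of $S_\mu=\{0,\mu_1,\dots,\mu_{N-1},1\}$, $f_\mu$ is left or right continuous. For $\alpha=(i_0,\dots,i_{n-1})$, $\varphi^\alpha=\varphi_{i_{n-1}}\circ\cdots\circ\varphi_{i_0}$; $(\Phi,\mu)$ has a singular connection if $\varphi^\alpha(\mu_i)=\mu_j$ for some $n\ge1$, $\alpha\in\{1,\dots,N\}^n$, $i,j\in\{1,\dots,N-1\}$. A point $x$ is regular of order $n$ if $f_\mu^k(x)\notin S_\mu$ for $0\le k<n$; $\mathcal{I}_n(f_\mu)$ is the set of tuples $(i_0,\dots,i_{n-1})$ such that some regular point of order $n$ has $f_\mu^k(x)\in A_{i_k,\mu}$ for $0\le k<n$. With $U_\delta(\mu^* )=U\cap B_\delta(\mu^* )$ and $\mathcal{J}^\delta_n(\mu^*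 )=\bigcup_{\mu\in U_\delta(\mu^* )}\mathcal{I}_n(f_\mu)$, Hypothesis (E) at $\mu^*$ means $\lim_{\delta\to0^+}\limsup_{n\to\infty}\frac1n\log\#\mathcal{J}_n^\delta(\mu^* )=0$. *)

From HB Require Import structures.
From mathcomp Require Import all_boot all_order all_algebra.
From mathcomp Require Import all_classical all_reals all_analysis.
Set Implicit Arguments. Unset Strict Implicit. Unset Printing Implicit Defensive.
Import Order.TTheory GRing.Theory Num.Theory.
Local Open Scope ring_scope.

Section Defs.
Variables (R : realType) (N : nat).

(* Parameters mu = (mu_1,...,mu_{N-1}) are functions 'I_(N.-1) -> R;
   the coordinate k : 'I_(N.-1) stands for mu_{k+1}. *)
Definition param := 'I_(N.-1) -> R.

Definition mu_ext (mu : param) (k : nat) : R :=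
  if k == 0%N then 0
  else if (k < N)%N then (match insub k.-1 with Some j => mu j | None => 0 end : R)
  else 1.

Definition inU (mu : param) : Prop :=
  forall k : nat, (k < N)%N -> mu_ext mu k < mu_ext mu k.+1.

(* A_{i+1,mu} = (mu_i, mu_{i+1}) for i : 'I_N  (0-based index) *)
Definition inA (mu : param) (i : 'I_N) (x : R) : Prop :=
  mu_ext mu i < x < mu_ext mu i.+1.

Definition inS (mu : param) (x : R) : Prop :=
  x = 0 \/ x = 1 \/ exists j : 'I_(N.-1), x = mu j.

(* phi^alpha = phi_{i_{n-1}} o ... o phi_{i_0} for alpha = (i_0,...,i_{n-1}) *)
Definition phi_comp (phi : 'I_N -> R -> R) (alpha : seq 'I_N) (x : R) : R :=
  foldl (fun y i => phi i y) x alpha.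

Definition singular_connection (phi : 'I_N -> R -> R) (mu : param) : Prop :=
  exists (alpha : seq 'I_N) (i j : 'I_(N.-1)),
    (1 <= size alpha)%N /\ phi_comp phi alpha (mu i) = mu j.

Definition bi_lipschitz (lam : R) (g : R -> R) : Prop :=
  (forall x y, 0 <= x <= 1 -> 0 <= y <= 1 -> `|g x - g y| <= lam * `|x - y|) /\
  exists c : R, 0 < c /\
    forall x y, 0 <= x <= 1 -> 0 <= y <= 1 -> c * `|x - y| <= `|g x - g y|.

Definition left_cont01 (g : R -> R) (s : R) : Prop :=
  forall e, 0 < e -> exists d, 0 < d /\
    forall y, 0 <= y <= 1 -> s - d < y <= s -> `|g y - g s| < e.
Definition right_cont01 (g : R -> R) (s : R) : Prop :=
  forall e, 0 < e -> exists d, 0 < d /\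
    forall y, 0 <= y <= 1 -> s <= y < s + d -> `|g y - g s| < e.

Definition is_f (phi : 'I_N -> R -> R) (mu : param) (g : R -> R) : Prop :=
  (forall x, 0 <= x <= 1 -> 0 <= g x <= 1) /\
  (forall (i : 'I_N) x, inA mu i x -> g x = phi i x) /\
  (forall s, inS mu s -> 0 <= s <= 1 -> left_cont01 g s \/ right_cont01 g s).

Definition regular (mu : param) (g : R -> R) (n : nat) (x : R) : Prop :=
  0 <= x <= 1 /\ forall k, (k < n)%N -> ~ inS mu (iter k g x).

Definition itineraries (mu : param) (g : R -> R) (n : nat) (t : n.-tuple 'I_N) : Prop :=
  exists x, regular mu g n x /\ forall k : 'I_n, inA mu (tnth t k) (iter k g x).

Definition dist_param (mu nu : param) : R :=
  Num.sqrt (\sum_(k < N.-1) (mu k - nu k) ^+ 2).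

Definition Jset (f : param -> R -> R) (mustar : param) (delta : R) (n : nat)
  : {set n.-tuple 'I_N} :=
  [set t | `[< exists mu, inU mu /\ dist_param mu mustar < delta /\
                         itineraries mu (f mu) t >]].

Definition hypothesisE (f : param -> R -> R) (mustar : param) : Prop :=
  ((fun delta : R =>
      limn_esup (fun n : nat => ((n%:R)^-1 * ln (#|Jset f mustar delta n|%:R))%:E))
     @ at_right 0 --> (0 : \bar R))%classic.

End Defs.

(* Since Φ has no singular connection at μ*, for every m the first m images of the
   discontinuities μ*_i under words of Φ stay a distance d > 0 away from the μ*_j.
   Fix an itinerary prefix u of length n with 2δ + 3λ^n < d.  The points coded by u fill
   an interval of length at most λ^n, and two itineraries u·p·a·…, u·p·b·… (a ≠ b) of
   parameters δ-close to μ* force the orbit point coded by u·p to be (δ + λ^n)-close to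
   some μ*_j.  Two such branch points at most m apart would contradict the gap, so the
   suffixes of length m branch at most once and are determined by a single letter:
   #J_{n+m} ≤ N·#J_n.  Hence #J_n grows like N^{n/m}, the exponential growth rate is at
   most (ln N)/m, and m is arbitrary. *)

From Pilot Require Import Defs.
From HB Require Import structures.
From mathcomp Require Import all_boot all_order all_algebra.
From mathcomp Require Import all_classical all_reals all_analysis.
From mathcomp Require Import lra zify.
Set Implicit Arguments. Unset Strict Implicit. Unset Printing Implicit Defensive.
Import Order.TTheory GRing.Theory Num.Theory.
Local Open Scope classical_set_scope.
Local Open Scope ring_scope.

Section PhiComp.
Variables (R : realType) (N : nat) (phi : 'I_N -> R -> R).

Lemma phi_comp_cat s1 s2 y :
  phi_comp phi (s1 ++ s2) y = phi_comp phi s2 (phi_comp phi s1 y).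
Proof. by rewrite /phi_comp foldl_cat. Qed.

Hypothesis phi_in01 : forall i x, 0 <= x <= 1 -> 0 <= phi i x <= 1.

Lemma phi_comp_in01 s y : 0 <= y <= 1 -> 0 <= phi_comp phi s y <= 1.
Proof. by elim: s y => [|a s IH] y y01 //; apply/IH/phi_in01. Qed.

Lemma phi_comp_lipschitz (lam : R) :
  0 <= lam ->
  (forall i x y, 0 <= x <= 1 -> 0 <= y <= 1 -> `|phi i x - phi i y| <= lam * `|x - y|) ->
  forall s x y, 0 <= x <= 1 -> 0 <= y <= 1 ->
  `|phi_comp phi s x - phi_comp phi s y| <= lam ^+ size s * `|x - y|.
Proof.
move=> lam0 lip; elim=> [|a s IH] x y Hx Hy; first by rewrite mul1r.
apply: le_trans (IH _ _ (phi_in01 a Hx) (phi_in01 a Hy)) _.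
by rewrite exprSr -mulrA ler_wpM2l ?exprn_ge0 ?lip.
Qed.

Lemma phi_comp_nonexpansive :
  (forall i x y, 0 <= x <= 1 -> 0 <= y <= 1 -> `|phi i x - phi i y| <= `|x - y|) ->
  forall s x y, 0 <= x <= 1 -> 0 <= y <= 1 ->
  `|phi_comp phi s x - phi_comp phi s y| <= `|x - y|.
Proof.
move=> nonexp s x y x01 y01.
rewrite -[`|x - y|]mul1r -(expr1n _ (size s)).
by apply: phi_comp_lipschitz => // i x' y' *; rewrite mul1r nonexp.
Qed.

End PhiComp.

Fixpoint follows (R : realType) (N : nat) (mu : param R N)
    (phi : 'I_N -> R -> R) (s : seq 'I_N) (y : R) : Prop :=
  if s is a :: s' then inA mu a y /\ follows mu phi s' (phi a y) else True.

Lemma follows_cat (R : realType) (N : nat) (mu : param R N) phi s1 s2 y :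
  follows mu phi (s1 ++ s2) y <->
  follows mu phi s1 y /\ follows mu phi s2 (phi_comp phi s1 y).
Proof. by elim: s1 y => [|a s IH] y /=; [tauto | rewrite IH; tauto]. Qed.

Lemma follows_of_iter (R : realType) (N : nat) (phi : 'I_N -> R -> R)
    (mu : param R N) (g : R -> R) (i0 : 'I_N) s x :
  is_f phi mu g -> 0 <= x <= 1 ->
  (forall k, (k < size s)%N -> inA mu (nth i0 s k) (iter k g x)) ->
  follows mu phi s x.
Proof.
move=> [g01 [gA _]]; elim: s x => [|a s IH] x x01 itin //=.
have xa : inA mu a x by apply: (itin 0%N).
split=> //; rewrite -(gA a x xa); apply: IH; first exact: g01.
by move=> k ks; rewrite -iterSr; apply: (itin k.+1).
Qed.

(* Unqualified, [mu_ext] would resolve to the measure extension of MathComp-Analysis. *)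
Section Partition.
Variables (R : realType) (N : nat).
Implicit Types mu : param R N.

Lemma mu_ext_le mu k l : inU mu -> (k <= l <= N)%N -> Defs.mu_ext mu k <= Defs.mu_ext mu l.
Proof.
move=> muU /andP[]; elim: l => [|l IH]; first by rewrite leqn0 => /eqP->.
rewrite leq_eqVlt => /orP[/eqP->//|kl] lN.
by apply: le_trans (IH kl (ltnW lN)) _; apply/ltW/muU.
Qed.

Lemma mu_ext_interior mu k : (0 < k < N)%N ->
  exists j : 'I_N.-1, Defs.mu_ext mu k = mu j.
Proof.
case/andP=> k0 kN; rewrite /Defs.mu_ext (negbTE (lt0n_neq0 k0)) kN.
case: insubP => [j _ _|/negP[]]; first by exists j.
by rewrite -ltnS (ltn_predK k0) (ltn_predK kN).
Qed.

Lemma param_in01 mu (j : 'I_N.-1) : inU mu -> 0 <= mu j <= 1.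
Proof.
move=> muU; have jN : (0 < j.+1 < N)%N by rewrite /= -ltn_predRL ltn_ord.
have -> : mu j = Defs.mu_ext mu j.+1.
  by rewrite /Defs.mu_ext /= (andP jN).2 -[insub _]/(insub (val j)) valK.
have N0 : (0 < N)%N by case/andP: jN => _; apply: leq_trans.
rewrite -[0](_ : Defs.mu_ext mu 0 = 0) // -[1](_ : Defs.mu_ext mu N = 1); last first.
  by rewrite /Defs.mu_ext ltnn; case: N N0 {muU j jN}.
by rewrite !mu_ext_le //; lia.
Qed.

Definition param_close (mu mustar : param R N) (delta : R) :=
  forall k, `|Defs.mu_ext mu k - Defs.mu_ext mustar k| <= delta.

Lemma param_close_of_dist mu mustar delta :
  dist_param mu mustar < delta -> param_close mu mustar delta.
Proof.
move=> dist_lt k; have delta0 : 0 <= delta := le_trans (sqrtr_ge0 _) (ltW dist_lt).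
rewrite /Defs.mu_ext; case: (k == 0%N); first by rewrite subrr normr0.
case: (k < N)%N; last by rewrite subrr normr0.
case: insubP => [j _ _|_]; last by rewrite subrr normr0.
apply: le_trans (ltW dist_lt); rewrite -sqrtr_sqr; apply: ler_wsqrtr.
by rewrite (bigD1 j) //= lerDl sumr_ge0 // => i _; apply: sqr_ge0.
Qed.

Lemma dist_boundary_le (mu mu' mustar : param R N) (delta r : R) (a b : 'I_N) z z' :
  inU mu -> param_close mu mustar delta -> param_close mu' mustar delta ->
  (a < b)%N -> inA mu a z -> inA mu' b z' -> `|z - z'| <= r ->
  `|z - Defs.mu_ext mustar b| <= delta + r.
Proof.
move=> muU close close' ab /andP[_ z_lt] /andP[z'_gt _] zz'.
have : Defs.mu_ext mu a.+1 <= Defs.mu_ext mu b by rewrite mu_ext_le // ab ltnW.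
move: (close b) (close' b) zz'; rewrite !ler_norml => /andP[? ?] /andP[? ?] /andP[? ?] ?.
apply/andP; split; lra.
Qed.

End Partition.

Lemma first_mismatch (T : eqType) (s s' : seq T) : size s = size s' -> s <> s' ->
  exists p a b t t', [/\ a != b, s = p ++ a :: t & s' = p ++ b :: t'].
Proof.
elim: s s' => [|x s IH] [|x' s'] //= [size_eq] ss'.
case: (eqVneq x x') ss' => [<- ss'|xx' _]; last by exists [::], x, x', s, s'.
have ne : s <> s' by move=> E; apply: ss'; rewrite E.
have [p [a [b [t [t' [ab -> ->]]]]]] := IH s' size_eq ne.
by exists (x :: p), a, b, t, t'.
Qed.

Lemma prefix_total (T : eqType) (p1 p2 s : seq T) :
  prefix p1 s -> prefix p2 s -> prefix p1 p2 || prefix p2 p1.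
Proof.
wlog le12 : p1 p2 / (size p1 <= size p2)%N => [hwlog|].
  by case/orP: (leq_total (size p1) (size p2)) => /hwlog h *; rewrite ?h // orbC h.
rewrite !prefixE => /eqP E1 /eqP E2; apply/orP; left.
by rewrite -{1}E2 take_takel // E1.
Qed.

Definition branch_point (T : eqType) (W : seq T -> Prop) (p : seq T) :=
  exists a b t t', [/\ a != b, W (p ++ a :: t) & W (p ++ b :: t')].

Section BranchPoints.
Variables (T : eqType) (W : seq T -> Prop) (m : nat).
Hypothesis W_size : forall s, W s -> size s = m.
Hypothesis branch_point_isolated :
  forall p q, branch_point W p -> branch_point W (p ++ q) -> q = [::].

Lemma branch_point_of_mismatch s s' : W s -> W s' -> s <> s' ->
  exists p a b t t', [/\ branch_point W p, a != b, s = p ++ a :: t & s' = p ++ b :: t'].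
Proof.
move=> Ws Ws' /(first_mismatch (etrans (W_size Ws) (esym (W_size Ws')))).
case=> p [a [b [t [t' [ab Es Es']]]]].
by exists p, a, b, t, t'; split=> //; exists a, b, t, t'; rewrite -Es -Es'.
Qed.

Lemma branch_point_comparable p p' s :
  branch_point W p -> branch_point W p' -> prefix p s -> prefix p' s -> p = p'.
Proof.
move=> bp bp' /prefix_total/[apply] /orP[|] /prefixP[q eq_q].
  by move: bp'; rewrite eq_q => /(branch_point_isolated bp)->; rewrite cats0.
by move: bp; rewrite eq_q => /(branch_point_isolated bp')->; rewrite cats0.
Qed.

Lemma branch_point_prefix p s : branch_point W p -> W s -> prefix p s.
Proof.
move=> bp Ws; have [a [b [t [t' [_ Wa _]]]]] := bp.
have [->|/eqP ne] := eqVneq s (p ++ a :: t); first exact: prefix_prefix.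
have [p' [x [y [u [u' [bp' _ Es Ea]]]]]] := branch_point_of_mismatch Ws Wa ne.
have -> : p = p'.
  apply: (@branch_point_comparable _ _ (p' ++ y :: u')) => //.
  - by rewrite -Ea prefix_prefix.
  - exact: prefix_prefix.
by rewrite Es prefix_prefix.
Qed.

Lemma branch_point_unique p p' : branch_point W p -> branch_point W p' -> p = p'.
Proof.
move=> bp bp'; have [a [_ [t [_ [_ Wa _]]]]] := bp.
exact: branch_point_comparable bp bp' (branch_point_prefix bp Wa)
  (branch_point_prefix bp' Wa).
Qed.

Lemma exists_nth_injective (x0 : T) :
  exists k, forall s s', W s -> W s' -> nth x0 s k = nth x0 s' k -> s = s'.
Proof.
have [[p0 bp0]|no_bp] := pselect (exists p, branch_point W p); last first.
  exists 0%N => s s' Ws Ws' _; apply: contrapT => /(branch_point_of_mismatch Ws Ws').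
  by case=> p [_ [_ [_ [_ [bp _ _ _]]]]]; apply: no_bp; exists p.
exists (size p0) => s s' Ws Ws' nth_eq; apply: contrapT.
move=> /(branch_point_of_mismatch Ws Ws')[p [a [b [t [t' [bp ab Es Es']]]]]].
move: nth_eq; rewrite Es Es' (branch_point_unique bp0 bp) !nth_cat ltnn subnn /=.
by move/eqP; rewrite (negbTE ab).
Qed.

End BranchPoints.

Definition gap_upto (R : realType) (N : nat) (phi : 'I_N -> R -> R) (mustar : param R N)
    (m : nat) (d : R) :=
  forall q, (0 < size q <= m)%N -> forall i j : 'I_N.-1,
    d <= `|phi_comp phi q (mustar i) - mustar j|.

Section BranchGeometry.
Variables (R : realType) (N : nat) (phi : 'I_N -> R -> R) (mustar : param R N).
Variables (delta r : R) (P : R -> Prop) (W : seq 'I_N -> Prop).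
Hypothesis phi_in01 : forall i x, 0 <= x <= 1 -> 0 <= phi i x <= 1.
Hypothesis phi_nonexpansive :
  forall i x y, 0 <= x <= 1 -> 0 <= y <= 1 -> `|phi i x - phi i y| <= `|x - y|.
Hypothesis mustarU : inU mustar.
Hypothesis P_in01 : forall y, P y -> 0 <= y <= 1.
Hypothesis P_diam : forall y y', P y -> P y' -> `|y - y'| <= r.
Hypothesis W_realized : forall s, W s -> exists y mu,
  [/\ P y, inU mu, param_close mu mustar delta & follows mu phi s y].

Lemma branch_point_near_boundary p : branch_point W p ->
  exists y (j : 'I_N.-1), P y /\ `|phi_comp phi p y - mustar j| <= delta + r.
Proof.
case=> a [b [t [t' [ab Wa Wb]]]].
have [y [mu [Py muU close /follows_cat[_ /= [ya _]]]]] := W_realized Wa.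
have [y' [mu' [Py' mu'U close' /follows_cat[_ /= [yb _]]]]] := W_realized Wb.
have yy' : `|phi_comp phi p y - phi_comp phi p y'| <= r.
  by apply: le_trans (P_diam Py Py'); apply: phi_comp_nonexpansive; rewrite ?P_in01.
have [k [y1 [Py1 k_pos near]]] : exists (k : 'I_N) y1, [/\ P y1, (0 < k)%N &
    `|phi_comp phi p y1 - Defs.mu_ext mustar k| <= delta + r].
  case: (ltngtP a b) => [lt|gt|eq]; last by move: ab; rewrite (val_inj eq) eqxx.
    by exists b, y; split=> //; [apply: leq_ltn_trans lt | apply: dist_boundary_le ya yb _].
  exists a, y'; split=> //; first exact: leq_ltn_trans gt.
  by apply: dist_boundary_le yb ya _; rewrite // distrC.
have [j Ej] : exists j : 'I_N.-1, Defs.mu_ext mustar k = mustar j.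
  by apply: mu_ext_interior; rewrite k_pos ltn_ord.
by exists y1, j; rewrite -Ej.
Qed.

Lemma branch_point_isolated_of_gap m d :
  gap_upto phi mustar m d -> 2 * delta + 3 * r < d ->
  (forall s, W s -> size s = m) ->
  forall p q, branch_point W p -> branch_point W (p ++ q) -> q = [::].
Proof.
move=> gap d_gt W_size p q bp bpq; apply: contrapT => /eqP q_nil.
have q_size : (0 < size q <= m)%N.
  have [a [_ [t [_ [_ Wa _]]]]] := bpq.
  rewrite lt0n size_eq0 q_nil -(W_size _ Wa) !size_cat /=; lia.
have [y1 [j1 [Py1 near1]]] := branch_point_near_boundary bp.
have [y2 [j2 [Py2 near2]]] := branch_point_near_boundary bpq.
have far := gap q q_size j1 j2.
have e1 : `|phi_comp phi q (mustar j1) - phi_comp phi (p ++ q) y1| <= delta + r.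
  rewrite phi_comp_cat distrC; apply: le_trans near1.
  by apply: phi_comp_nonexpansive; rewrite ?param_in01 ?phi_comp_in01 ?P_in01.
have e2 : `|phi_comp phi (p ++ q) y1 - phi_comp phi (p ++ q) y2| <= r.
  by apply: le_trans (P_diam Py1 Py2); apply: phi_comp_nonexpansive; rewrite ?P_in01.
have := ler_distD (phi_comp phi (p ++ q) y2) (phi_comp phi (p ++ q) y1) (mustar j2).
have := ler_distD (phi_comp phi (p ++ q) y1) (phi_comp phi q (mustar j1)) (mustar j2).
lra.
Qed.

End BranchGeometry.

Lemma gap_of_no_connection (R : realType) (N : nat) (phi : 'I_N -> R -> R)
    (mustar : param R N) :
  ~ singular_connection phi mustar -> forall m, exists2 d, 0 < d & gap_upto phi mustar m d.
Proof.
move=> no_conn m.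
pose g (x : {k : 'I_m & k.+1.-tuple 'I_N} * 'I_N.-1 * 'I_N.-1) :=
  `|phi_comp phi (tagged x.1.1) (mustar x.1.2) - mustar x.2|.
have g_pos x : 0 < g x.
  case: x => [[[k t] i] j]; rewrite normr_gt0 subr_eq0; apply/negP => /eqP conn.
  by apply: no_conn; exists (val t), i, j; rewrite size_tuple.
exists (\big[Num.min/1]_x g x).
  by elim/big_ind: _ => // a b a0 b0; rewrite lt_min a0 b0.
move=> q /andP[q0 qm] i j.
have km : ((size q).-1 < m)%N by rewrite prednK.
have qk : size q == (Ordinal km).+1 by rewrite /= prednK.
exact: bigmin_le _ (Tagged (fun k : 'I_m => k.+1.-tuple 'I_N) (Tuple qk), i, j) g.
Qed.

Definition tuple_take (T : Type) (x0 : T) (n m : nat) (t : (n + m).-tuple T) : n.-tuple T :=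
  insubd (nseq_tuple n x0) (take n t).

Lemma val_tuple_take (T : Type) (x0 : T) n m (t : (n + m).-tuple T) :
  val (tuple_take x0 t) = take n t.
Proof. by rewrite insubdK // unfold_in /= size_takel // size_tuple leq_addr. Qed.

Section JsetCounting.
Variables (R : realType) (N : nat) (i0 : 'I_N) (lam : R) (phi : 'I_N -> R -> R).
Variables (f : param R N -> R -> R) (mustar : param R N).
Hypotheses (lam_ge0 : 0 <= lam) (lam_le1 : lam <= 1).
Hypothesis phi_in01 : forall i x, 0 <= x <= 1 -> 0 <= phi i x <= 1.
Hypothesis phi_lip :
  forall i x y, 0 <= x <= 1 -> 0 <= y <= 1 -> `|phi i x - phi i y| <= lam * `|x - y|.
Hypothesis f_is : forall mu, inU mu -> is_f phi mu (f mu).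
Hypothesis mustarU : inU mustar.

Lemma Jset_take delta n m (t : (n + m).-tuple 'I_N) :
  t \in Jset f mustar delta (n + m) -> tuple_take i0 t \in Jset f mustar delta n.
Proof.
rewrite !inE => -[mu [muU [dist_lt [x [[x01 reg] itin]]]]].
exists mu; split=> //; split=> //; exists x; split.
  by split=> // k kn; apply: reg; apply: ltn_addr.
move=> k; have := itin (widen_ord (leq_addr m n) k).
by rewrite !(tnth_nth i0) val_tuple_take nth_take.
Qed.

Lemma Jset_follows delta n (t : n.-tuple 'I_N) :
  t \in Jset f mustar delta n -> exists x mu,
    [/\ 0 <= x <= 1, inU mu, param_close mu mustar delta & follows mu phi t x].
Proof.
rewrite !inE => -[mu [muU [dist_lt [x [[x01 _] itin]]]]].
exists x, mu; split=> //; first exact: param_close_of_dist.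
apply: (follows_of_iter (i0 := i0) (f_is muU) x01) => k; rewrite size_tuple => kn.
by have := itin (Ordinal kn); rewrite (tnth_nth i0).
Qed.

Definition Jset_suffixes delta n m (u s : seq 'I_N) :=
  exists2 t, t \in Jset f mustar delta (n + m) & val t = u ++ s.

Lemma Jset_suffixes_nth_injective n m d delta u :
  gap_upto phi mustar m d -> 2 * delta + 3 * lam ^+ n < d -> size u = n ->
  exists k, forall s s', Jset_suffixes delta n m u s -> Jset_suffixes delta n m u s' ->
    nth i0 s k = nth i0 s' k -> s = s'.
Proof.
move=> gap d_gt u_size.
have W_size s : Jset_suffixes delta n m u s -> size s = m.
  by case=> t _ /(congr1 size); rewrite size_tuple size_cat u_size => /addnI.
suff isolated p q : branch_point (Jset_suffixes delta n m u) p ->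
    branch_point (Jset_suffixes delta n m u) (p ++ q) -> q = [::].
  exact: exists_nth_injective W_size isolated i0.
pose P y := exists2 x, 0 <= x <= 1 & y = phi_comp phi u x.
apply: (branch_point_isolated_of_gap (r := lam ^+ n) (P := P) phi_in01 _ mustarU _ _ _
  gap d_gt W_size).
- move=> i x y x01 y01; apply: le_trans (phi_lip i x01 y01) _.
  by rewrite ler_piMl ?normr_ge0.
- by move=> _ [x x01 ->]; apply: phi_comp_in01.
- move=> _ _ [x x01 ->] [y y01 ->].
  apply: le_trans (phi_comp_lipschitz phi_in01 lam_ge0 phi_lip u x01 y01) _.
  rewrite u_size ler_piMr ?exprn_ge0 //.
  by move: x01 y01 => /andP[? ?] /andP[? ?]; rewrite ler_norml; apply/andP; split; lra.
- move=> s [t /Jset_follows[x [mu [x01 muU close follow_t]]] t_eq].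
  move: follow_t; rewrite t_eq => /follows_cat[_ follow_s].
  by exists (phi_comp phi u x), mu; split=> //; exists x.
Qed.

Lemma card_Jset_step n m d delta :
  gap_upto phi mustar m d -> 2 * delta + 3 * lam ^+ n < d ->
  (#|Jset f mustar delta (n + m)| <= #|Jset f mustar delta n| * N)%N.
Proof.
move=> gap d_gt.
have letter_inj u : exists k, size u = n ->
    forall s s', Jset_suffixes delta n m u s -> Jset_suffixes delta n m u s' ->
    nth i0 s k = nth i0 s' k -> s = s'.
  have [u_size|u_size] := eqVneq (size u) n.
    by have [k k_inj] := Jset_suffixes_nth_injective gap d_gt u_size; exists k.
  by exists 0%N => /eqP; rewrite (negbTE u_size).
have [K K_inj] := choice letter_inj.
pose h (t : (n + m).-tuple 'I_N) := (tuple_take i0 t, nth i0 t (n + K (take n t))).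
have h_inj : {in Jset f mustar delta (n + m) &, injective h}.
  move=> t t' Jt Jt' [/(congr1 val)]; rewrite !val_tuple_take => take_eq.
  rewrite -!nth_drop take_eq => letter_eq; apply: val_inj.
  rewrite -[val t](cat_take_drop n) -[val t'](cat_take_drop n) take_eq; congr (_ ++ _).
  apply: (K_inj (take n t')) letter_eq; first by rewrite size_takel // size_tuple leq_addr.
    by exists t; rewrite // -take_eq cat_take_drop.
  by exists t'; rewrite // cat_take_drop.
rewrite -(card_in_imset h_inj).
apply: (@leq_trans #|finset.setX (Jset f mustar delta n) [set: 'I_N]|).
  apply/subset_leq_card/fintype.subsetP => _ /imsetP[t Jt ->].
  by rewrite finset.in_setX finset.in_setT andbT Jset_take.
by rewrite cardsX cardsT card_ord.
Qed.

End JsetCounting.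

Lemma step_growth_bound (c : nat -> nat) (N m n0 : nat) :
  (0 < N)%N -> (0 < m)%N ->
  (forall n, (n0 <= n)%N -> (c (n + m) <= c n * N)%N) ->
  (forall n, (c n <= N ^ n)%N) ->
  forall n, (c n <= N ^ (n0 + m + n %/ m))%N.
Proof.
move=> N0 m0 step triv; elim/ltn_ind => n IH.
have [small|large] := ltnP n (n0 + m).
  by apply: leq_trans (triv n) _; rewrite leq_pexp2l // (leq_trans (ltnW small)) ?leq_addr.
have -> : n = (n - m + m)%N by lia.
apply: leq_trans (step _ _) _; first by lia.
rewrite divnDr ?dvdnn // divnn m0 addnA expnD expn1 leq_mul2r IH ?orbT //; lia.
Qed.

Lemma ln_natr_ge0 (R : realType) (k : nat) : 0 <= ln (k%:R : R).
Proof. by case: k => [|k]; [rewrite ln0 | apply: ln_ge0; rewrite ler1n]. Qed.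

Lemma ln_rate_le (R : realType) (c : nat -> nat) (N m K : nat) (eps : R) :
  (0 < N)%N -> 0 < eps -> ln (N%:R : R) <= eps / 2 * m%:R ->
  (forall n, (c n <= N ^ (K + n %/ m))%N) ->
  \forall n \near \oo, n%:R^-1 * ln (c n)%:R <= eps.
Proof.
move=> N0 eps0 lnN_le bound; set L := ln (N%:R : R).
exists (Num.truncn (2 * (K%:R * L) / eps)).+1 => // n /= n_large.
have n_gt : 2 * (K%:R * L) < eps * n%:R.
  have : 2 * (K%:R * L) / eps < n%:R.
    by apply: lt_le_trans (truncnS_gt _) _; rewrite ler_nat.
  by rewrite ltr_pdivrMr // [eps * _]mulrC.
have n0 : (0 < n)%N by apply: leq_trans n_large.
have ln_c : ln (c n)%:R <= (K + n %/ m)%:R * L.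
  have [->|c0] := posnP (c n); first by rewrite ln0 // mulr_ge0 ?ln_natr_ge0.
  apply: le_trans (_ : ln (N ^ (K + n %/ m))%:R <= _).
    by rewrite ler_ln ?posrE ?ltr0n ?expn_gt0 ?N0 // ler_nat.
  by rewrite natrX lnXn ?ltr0n // mulr_natl.
have div_le : (n %/ m)%:R * m%:R <= n%:R :> R by rewrite -natrM ler_nat leq_divM.
rewrite ler_pdivrMl ?ltr0n //; apply: le_trans ln_c _.
rewrite natrD mulrDl.
have : (n %/ m)%:R * L <= eps / 2 * ((n %/ m)%:R * m%:R).
  by rewrite mulrCA; apply: ler_wpM2l.
have : eps / 2 * ((n %/ m)%:R * m%:R) <= eps / 2 * n%:R.
  by apply: ler_wpM2l => //; rewrite divr_ge0 ?ltW.
lra.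
Qed.

Lemma limn_esup_le_near (R : realType) (u : (\bar R)^nat) (l : \bar R) :
  (\forall n \near \oo, (u n <= l)%E) -> (limn_esup u <= l)%E.
Proof.
move=> [n1 _ ul]; rewrite limn_esup_lim; apply: lime_le; first exact: is_cvg_esups.
exists n1 => // n /= n1n; apply: ge_ereal_sup => _ [k /= nk <-].
by apply: ul; apply: leq_trans nk.
Qed.

Lemma cvge0_of_ge0_le (T : Type) (F : set_system T) (FF : ProperFilter F)
    (R : realType) (S : T -> \bar R) :
  (forall x, (0 <= S x)%E) ->
  (forall eps : R, 0 < eps -> \forall x \near F, (S x <= eps%:E)%E) ->
  S @ F --> 0%E.
Proof.
move=> S0 S_le; apply/fine_cvgP; split.
  apply: filterS (S_le 1 ltr01) => x Sx.
  by rewrite ge0_fin_numE // (le_lt_trans Sx) ?ltry.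
apply/cvgrPdist_le => e e0; apply: filterS (S_le e e0) => x /=.
have := S0 x; case: (S x) => [r||] //=; rewrite !lee_fin => r0 re.
by rewrite sub0r normrN ger0_norm.
Qed.

Section ItineraryEntropy.
Variables (R : realType) (N : nat) (i0 : 'I_N) (lam : R) (phi : 'I_N -> R -> R).
Variables (f : param R N -> R -> R) (mustar : param R N).
Hypotheses (lam_ge0 : 0 <= lam) (lam_lt1 : lam < 1).
Hypothesis phi_in01 : forall i x, 0 <= x <= 1 -> 0 <= phi i x <= 1.
Hypothesis phi_lip :
  forall i x y, 0 <= x <= 1 -> 0 <= y <= 1 -> `|phi i x - phi i y| <= lam * `|x - y|.
Hypothesis f_is : forall mu, inU mu -> is_f phi mu (f mu).
Hypothesis mustarU : inU mustar.
Hypothesis no_connection : ~ singular_connection phi mustar.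

Definition itinerary_entropy (delta : R) : \bar R :=
  limn_esup (fun n => (n%:R^-1 * ln (#|Jset f mustar delta n|%:R))%:E).

Lemma itinerary_entropy_ge0 delta : (0 <= itinerary_entropy delta)%E.
Proof.
apply: limf_esup_ge0; first exact: filter_not_empty.
by move=> n; rewrite lee_fin mulr_ge0 ?invr_ge0 ?ln_natr_ge0.
Qed.

Lemma itinerary_entropy_le eps : 0 < eps ->
  \forall delta \near 0^'+, (itinerary_entropy delta <= eps%:E)%E.
Proof.
move=> eps0; have N0 : (0 < N)%N := leq_ltn_trans (leq0n i0) (ltn_ord i0).
set m := (Num.truncn (2 * ln (N%:R : R) / eps)).+1.
have lnN_le : ln (N%:R : R) <= eps / 2 * m%:R.
  by have := truncnS_gt (2 * ln (N%:R : R) / eps); rewrite -/m ltr_pdivrMr // => ?; lra.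
have [d d0 gap] := gap_of_no_connection no_connection m.
(* [delta < d / 4] and [lam ^+ n < d / 6] give the hypothesis [2 delta + 3 lam^n < d]. *)
have [n0 _ lam_small] : \forall n \near \oo, lam ^+ n < d / 6.
  have d6 : 0 < d / 6 by rewrite divr_gt0.
  have /cvgr0Pnorm_lt/(_ _ d6)[n0 _ small] : lam ^+ n @[n --> \oo] --> 0.
    by apply: cvg_expr; rewrite ger0_norm.
  by exists n0 => // n /= /small; rewrite ger0_norm // exprn_ge0.
near=> delta.
have step n : (n0 <= n)%N ->
    (#|Jset f mustar delta (n + m)| <= #|Jset f mustar delta n| * N)%N.
  move=> n0n.
  apply: (card_Jset_step i0 lam_ge0 (ltW lam_lt1) phi_in01 phi_lip f_is mustarU gap).
  have : delta < d / 4 by near: delta; apply: nbhs_right_lt; rewrite divr_gt0.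
  by have := lam_small n n0n; lra.
have triv n : (#|Jset f mustar delta n| <= N ^ n)%N.
  by apply: leq_trans (max_card _) _; rewrite card_tuple card_ord.
apply: limn_esup_le_near; apply: (ln_rate_le N0 eps0 lnN_le).
exact: step_growth_bound N0 _ step triv.
Unshelve. all: by end_near.
Qed.

End ItineraryEntropy.

Theorem lemma4p5 (R : realType) (N : nat) (lam : R)
  (phi : 'I_N -> R -> R) (f : param R N -> R -> R) (mustar : param R N) :
  (2 <= N)%N ->
  0 < lam < 1 ->
  (forall i, bi_lipschitz lam (phi i)) ->
  (forall i x, 0 <= x <= 1 -> 0 < phi i x < 1) ->
  (forall mu, inU mu -> is_f phi mu (f mu)) ->
  inU mustar ->
  ~ singular_connection phi mustar ->
  hypothesisE f mustar.
Proof.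
move=> N2 /andP[lam0 lam1] bilip phi_range f_is mustarU no_conn.
have i0 : 'I_N := Ordinal (ltnW N2).
have phi_in01 i x : 0 <= x <= 1 -> 0 <= phi i x <= 1.
  by move/(phi_range i)/andP=> [? ?]; rewrite !ltW.
have phi_lip i := (bilip i).1.
apply: cvge0_of_ge0_le => [delta|eps eps0]; first exact: itinerary_entropy_ge0.
exact: (itinerary_entropy_le i0 (ltW lam0) lam1 phi_in01 phi_lip f_is mustarU no_conn eps0).
Qed.
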